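(* Let $(A,C,k)$ be an approval-based multiwinner instance with $n$ voters, and let $W \subseteq C$ be an affordable committee. Then $\mathrm{cov}(W) \ge \frac{|W|}{k}\, n$.
   Context: An instance $(A,C,k)$ consists of a finite nonempty candidate set $C$, voters $N=\{1,\dots,n\}$ with $n\ge 1$, an approval set $A_i\subseteq C$ for each voter $i$, and a committee size $k$ with $1\le k\le |C|$. For $c\in C$ let $N_c=\{i\in N: c\in A_i\}$. A committee is a set $W\subseteq C$ with $|W|\le k$. The coverage is $\mathrm{cov}(W)=|\{i\in N: A_i\cap W\neq\emptyset\}|$. A payment system assigns to each voter $i$ a function $p_i:C\to\mathbb{R}_{\ge 0}$. A committee $W$ is affordable if there is a payment system with: (C1) $p_i(c)=0$ whenever $c\notin A_i$; (C2) $\sum_{c\in C}p_i(c)\le k/n$ for every $i\in N$; (C3) $\sum_{i\in N}p_i(c)=1$ for every $c\in W$; (C4) $\sum_{i\in N}p_i(c)=0$ for every $c\notin W$. *)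

From mathcomp Require Import all_boot all_order all_algebra.
Set Implicit Arguments. Unset Strict Implicit. Unset Printing Implicit Defensive.
Import Order.TTheory GRing.Theory Num.Theory.
Local Open Scope ring_scope.

Definition cov (C : finType) (n : nat) (A : 'I_n -> {set C}) (W : {set C}) : nat :=
  #|[set i : 'I_n | A i :&: W != set0]|.

Definition is_affording_payment (R : realFieldType) (C : finType) (n : nat)
    (A : 'I_n -> {set C}) (k : nat) (W : {set C}) (p : 'I_n -> C -> R) : Prop :=
  (forall i c, 0 <= p i c) /\
  (forall i c, c \notin A i -> p i c = 0) /\
  (forall i, \sum_(c : C) p i c <= k%:R / n%:R) /\
  (forall c, c \in W -> \sum_(i : 'I_n) p i c = 1) /\
  (forall c, c \notin W -> \sum_(i : 'I_n) p i c = 0).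

Definition affordable (R : realFieldType) (C : finType) (n : nat)
    (A : 'I_n -> {set C}) (k : nat) (W : {set C}) : Prop :=
  (#|W| <= k)%N /\ exists p : 'I_n -> C -> R, is_affording_payment A k W p.

From mathcomp Require Import all_boot all_order all_algebra.
Import Order.TTheory GRing.Theory Num.Theory.
Set Implicit Arguments. Unset Strict Implicit. Unset Printing Implicit Defensive.
Local Open Scope ring_scope.

(* Each member of W costs exactly 1, so the total paid to W is |W|.  Only
   voters covered by W can pay anything towards W, and each pays at most its
   budget k/n; hence |W| <= cov(W) * k/n. *)

Section PaymentsToCommittee.

Variables (R : numDomainType) (C I : finType).
Variables (A : I -> {set C}) (W : {set C}) (p : I -> C -> R) (b : R).

Hypothesis p_ge0 : forall i c, 0 <= p i c.
Hypothesis p_approved : forall i c, c \notin A i -> p i c = 0.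
Hypothesis p_budget : forall i, \sum_c p i c <= b.
Hypothesis p_funded : forall c, c \in W -> \sum_i p i c = 1.

Lemma card_committee_paid : #|W|%:R = \sum_i \sum_(c in W) p i c.
Proof.
rewrite exchange_big /= -sum1_card natr_sum.
by apply: eq_bigr => c cW; rewrite p_funded.
Qed.

Lemma paid_to_committee_le_budget i : \sum_(c in W) p i c <= b.
Proof.
apply: le_trans (p_budget i).
rewrite [leRHS](bigID (mem W)) /= lerDl.
by apply: sumr_ge0 => c _; apply: p_ge0.
Qed.

Lemma paid_to_committee_uncovered i : A i :&: W = set0 ->
  \sum_(c in W) p i c = 0.
Proof.
move=> /setP disjAW; apply: big1 => c cW; apply: p_approved.
by apply/negP => cA; move: (disjAW c); rewrite !inE cA cW.
Qed.

Lemma card_committee_le_covered :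
  #|W|%:R <= #|[set i | A i :&: W != set0]|%:R * b.
Proof.
rewrite card_committee_paid mulr_natl -sumr_const [leRHS]big_mkcond /=.
apply: ler_sum => i _; rewrite inE.
case: eqP => [AW0|_] /=; first by rewrite paid_to_committee_uncovered.
exact: paid_to_committee_le_budget.
Qed.

End PaymentsToCommittee.

Theorem mainTheorem1 (R : realFieldType) (C : finType) (n : nat)
    (A : 'I_n -> {set C}) (k : nat) (W : {set C}) :
  (0 < #|C|)%N -> (1 <= n)%N -> (1 <= k <= #|C|)%N ->
  affordable R A k W ->
  (cov A W)%:R >= (#|W|%:R / k%:R) * n%:R :> R.
Proof.
move=> _ n_gt0 /andP[k_gt0 _] [_ [p [p_ge0 [p_approved [p_budget [p_funded _]]]]]].
have := card_committee_le_covered p_ge0 p_approved p_budget p_funded.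
rewrite -/(cov A W) => Wle.
have k_pos : 0 < k%:R :> R by rewrite ltr0n.
have n_pos : 0 < n%:R :> R by rewrite ltr0n.
by rewrite -ler_pdivlMr // ler_pdivrMr // mulrAC -mulrA.
Qed.
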